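(* Richard Thompson's group $F$ is not presentable by a product.
   Context: Thompson's group $F$ is the group of piecewise linear orientation-preserving homeomorphisms of $[0,1]$ with finitely many breakpoints, all at dyadic rationals, and all slopes integral powers of $2$. An infinite group $\Gamma$ is not presentable by a product if for every homomorphism $\varphi\colon \Gamma_1\times\Gamma_2\to\Gamma$ whose image has finite index in $\Gamma$, at least one of $\varphi(\Gamma_1)$, $\varphi(\Gamma_2)$ is finite. *)

From Stdlib Require Import Reals List ZArith.
Open Scope R_scope.

Record Grp := {
  gcar :> Type;
  gmul : gcar -> gcar -> gcar;
  ginv : gcar -> gcar;
  gone : gcar;
  gmulA : forall x y z, gmul x (gmul y z) = gmul (gmul x y) z;
  gmul1 : forall x, gmul gone x = x;
  gmulV : forall x, gmul (ginv x) x = gone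
}.

Definition pmul (G1 G2 : Grp) (p q : gcar G1 * gcar G2) : gcar G1 * gcar G2 :=
  (gmul G1 (fst p) (fst q), gmul G2 (snd p) (snd q)).

Definition dyadic (x : R) : Prop :=
  exists (m : Z) (k : nat), x = IZR m / 2 ^ k.

(** Elements of Thompson's group F, realized as maps R -> R that are the
    identity outside [0,1] and, on [0,1], are piecewise linear homeomorphisms
    of [0,1] (fixing 0 and 1) with finitely many dyadic breakpoints and all
    slopes integral powers of 2.  Affine pieces on closed consecutive intervals
    force continuity, and positive slopes force strict monotonicity. *)
Definition thompsonF (f : R -> R) : Prop :=
  (forall x, (x < 0 \/ 1 < x) -> f x = x) /\
  f 0 = 0 /\ f 1 = 1 /\
  exists (n : nat) (p : nat -> R),
    p 0%nat = 0 /\ p n = 1 /\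
    (forall i, (i <= n)%nat -> dyadic (p i)) /\
    (forall i, (i < n)%nat -> p i < p (S i)) /\
    (forall i, (i < n)%nat -> exists (k : Z) (b : R),
        forall x, p i <= x <= p (S i) -> f x = powerRZ 2 k * x + b).

Definition fcomp (f g : R -> R) : R -> R := fun x => f (g x).

From Stdlib Require Import Reals List ZArith Lra Lia.
From Stdlib Require Import Classical ClassicalEpsilon FunctionalExtensionality.
Open Scope R_scope.

(* Every element of F is the identity outside [0,1] and linear near 0.  If [c]
   is a fixed-point-free element, then [c] and its inverse push any
   [c]-invariant property holding near 0 across all of [0,1).  Hence two
   elements commuting with [c] and having the same germ at 0 coincide; so
   elements of F commuting with [c] commute with each other, and an element
   commuting with [c] with an interior fixed point (hence slope 1 at 0) is
   trivial.

   Let phi : G1 x G2 -> F have finite index image.  By pigeonhole, two members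
   of an infinite family of elements that differ at every interior point lie in
   the same coset, which yields a fixed-point-free phi(a,b) = phi(a,1) phi(1,b);
   then one factor, say phi(a,1), is fixed-point-free.  Likewise a family of
   elements fixing 1/2 but pairwise different at 1/4 yields a nontrivial
   phi(q) fixing 1/2.  A nontrivial phi(1,b) would be fixed-point-free, so
   phi(q1,1) would commute with phi(a,1), hence so would phi(q), forcing
   phi(q) = 1.  Thus phi(1 x G2) is trivial. *)

Lemma real_induction (P : R -> Prop) :
  (exists d, 0 < d /\ forall s, 0 <= s < d -> P s) ->
  (forall T, 0 < T < 1 -> (forall s, 0 <= s < T -> P s) ->
     exists T', T < T' /\ forall s, 0 <= s < T' -> P s) ->
  forall s, 0 <= s < 1 -> P s.
Proof.
  intros (d & Hd & Hbase) Hstep.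
  set (E t := t <= 1 /\ forall s, 0 <= s < t -> P s).
  assert (Hmin : E (Rmin d 1)).
  { split; [apply Rmin_r|]. intros s Hs. apply Hbase. pose proof (Rmin_l d 1). lra. }
  destruct (completeness E) as (T & HTub & HTlub).
  { exists 1. intros t [Ht _]. exact Ht. }
  { exists (Rmin d 1). exact Hmin. }
  assert (Hpre : forall s, 0 <= s < T -> P s).
  { intros s Hs. apply NNPP. intros HPs.
    enough (T <= s) by lra.
    apply HTlub. intros t [_ Ht]. apply Rnot_lt_le. intros Hst. apply HPs, Ht. lra. }
  assert (HT0 : 0 < T) by (pose proof (HTub _ Hmin); pose proof (Rmin_glb_lt d 1 0); lra).
  assert (HT1 : 1 <= T).
  { apply Rnot_lt_le. intros HT1.
    destruct (Hstep T (conj HT0 HT1) Hpre) as (T' & HTT' & HT').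
    assert (HE : E (Rmin T' 1)).
    { split; [apply Rmin_r|]. intros s Hs. apply HT'. pose proof (Rmin_l T' 1). lra. }
    pose proof (HTub _ HE). pose proof (Rmin_glb_lt T' 1 T). lra. }
  intros s Hs. apply Hpre. lra.
Qed.

Record ord_auto (c c' : R -> R) : Prop := {
  ord_auto_K : forall x, c' (c x) = x;
  ord_auto_KV : forall x, c (c' x) = x;
  ord_auto_incr : forall x y, x < y -> c x < c y;
  ord_auto_0 : c 0 = 0 }.
Arguments ord_auto_K {c c'}. Arguments ord_auto_KV {c c'}.
Arguments ord_auto_incr {c c'}. Arguments ord_auto_0 {c c'}.

Definition fixpoint_free (c : R -> R) := forall x, 0 < x < 1 -> c x <> x.

Definition commute (u v : R -> R) := forall x, u (v x) = v (u x).

Section OrdAuto.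
Variables c c' : R -> R.
Hypothesis Hc : ord_auto c c'.

Lemma ord_auto_inj x y : c x = c y -> x = y.
Proof. intros E. rewrite <- (ord_auto_K Hc x), E. apply (ord_auto_K Hc). Qed.

Lemma ord_auto_lt x y : c x < c y <-> x < y.
Proof.
  split; [|apply (ord_auto_incr Hc)].
  intros Hlt. destruct (Rtotal_order x y) as [H|[H|H]]; [exact H| |].
  - subst. lra.
  - apply (ord_auto_incr Hc) in H. lra.
Qed.

Lemma ord_auto_le x y : c x <= c y <-> x <= y.
Proof.
  split; intros H; apply Rnot_lt_le; intros H'.
  - apply (ord_auto_incr Hc) in H'. lra.
  - apply (proj1 (ord_auto_lt _ _)) in H'. lra.
Qed.

Lemma ord_auto_sym : ord_auto c' c.
Proof.
  split; try apply Hc.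
  - intros x y Hxy. apply ord_auto_lt. rewrite !(ord_auto_KV Hc). exact Hxy.
  - rewrite <- (ord_auto_0 Hc) at 1. apply (ord_auto_K Hc).
Qed.

End OrdAuto.

Lemma invariant_spread_step g g' (P : R -> Prop) T :
  ord_auto g g' -> (forall s, P (g s) <-> P s) -> T < g T ->
  (forall s, 0 <= s < T -> P s) -> forall s, 0 <= s < g T -> P s.
Proof.
  intros Hg HP HT Hpre s Hs. pose proof (ord_auto_sym _ _ Hg) as Hg'.
  rewrite <- (ord_auto_KV Hg s), HP. apply Hpre. split.
  - rewrite <- (ord_auto_0 Hg'). apply (ord_auto_le _ _ Hg'). lra.
  - apply (ord_auto_lt _ _ Hg). rewrite (ord_auto_KV Hg). lra.
Qed.

(* The fixed-point-free [c] moves every interior point either up or down,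
   and then [c] or its inverse pushes a [c]-invariant property further up. *)
Lemma fixpoint_free_spread c c' (P : R -> Prop) :
  ord_auto c c' -> fixpoint_free c -> (forall s, P (c s) <-> P s) ->
  (exists d, 0 < d /\ forall s, 0 <= s < d -> P s) ->
  forall s, 0 <= s < 1 -> P s.
Proof.
  intros Hc Hfree HP Hbase. apply real_induction; [exact Hbase|].
  intros T HT Hpre.
  destruct (Rtotal_order (c T) T) as [Hlt|[Heq|Hgt]].
  - exists (c' T).
    assert (HTc' : T < c' T).
    { apply (ord_auto_lt _ _ Hc). rewrite (ord_auto_KV Hc). exact Hlt. }
    split; [exact HTc'|].
    apply (invariant_spread_step c' c); [apply ord_auto_sym, Hc| |exact HTc'|exact Hpre].
    intros s. rewrite <- HP, (ord_auto_KV Hc). reflexivity.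
  - contradiction (Hfree T HT).
  - exists (c T). split; [exact Hgt|]. exact (invariant_spread_step c c' P T Hc HP Hgt Hpre).
Qed.

Lemma fixpoint_free_agree c c' u w :
  ord_auto c c' -> fixpoint_free c -> commute u c -> commute w c ->
  (exists d, 0 < d /\ forall s, 0 <= s < d -> u s = w s) ->
  forall s, 0 <= s < 1 -> u s = w s.
Proof.
  intros Hc Hfree Hu Hw. apply (fixpoint_free_spread c c'); [exact Hc|exact Hfree|].
  intros s. rewrite Hu, Hw. split; [apply (ord_auto_inj _ _ Hc)|congruence].
Qed.

Definition linear_near0 (d : R -> R) (a : R) :=
  exists q, 0 < q /\ forall x, 0 <= x <= q -> d x = a * x.

Lemma linear_near0_comp u w a b : 0 < b ->
  linear_near0 u a -> linear_near0 w b -> linear_near0 (fun x => u (w x)) (a * b).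
Proof.
  intros Hb (qu & Hqu & Hu) (qw & Hqw & Hw).
  exists (Rmin qw (qu / b)). split.
  { apply Rmin_glb_lt; [lra|]. apply Rdiv_lt_0_compat; lra. }
  intros x Hx. pose proof (Rmin_l qw (qu / b)). pose proof (Rmin_r qw (qu / b)).
  assert (Hbx : b * x <= qu).
  { replace qu with (b * (qu / b)) by (field; lra). apply Rmult_le_compat_l; lra. }
  rewrite Hw, Hu by nra. ring.
Qed.

Lemma linear_near0_agree u w a : linear_near0 u a -> linear_near0 w a ->
  exists d, 0 < d /\ forall s, 0 <= s < d -> u s = w s.
Proof.
  intros (qu & Hqu & Hu) (qw & Hqw & Hw).
  exists (Rmin qu qw). split; [apply Rmin_glb_lt; lra|].
  intros s Hs. pose proof (Rmin_l qu qw). pose proof (Rmin_r qu qw).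
  rewrite Hu, Hw by lra. reflexivity.
Qed.

Lemma thompsonF_incr01 d : thompsonF d -> forall x y, 0 <= x < y -> y <= 1 -> d x < d y.
Proof.
  intros (_ & _ & _ & n & p & Hp0 & Hpn & _ & Hinc & Hpc).
  enough (H : forall i, (i <= n)%nat -> forall x y, 0 <= x < y -> y <= p i -> d x < d y)
    by (intros x y Hxy Hy; apply (H n); lia || lra).
  induction i as [|i IH]; intros Hi x y Hxy Hy; [rewrite Hp0 in Hy; lra|].
  destruct (Rle_dec y (p i)) as [Hyi|Hyi]; [apply IH; lia || lra|].
  destruct (Hpc i ltac:(lia)) as (k & b & Hk).
  assert (0 < powerRZ 2 k) by (apply powerRZ_lt; lra).
  rewrite (Hk y) by lra.
  destruct (Rle_dec (p i) x) as [Hxi|Hxi].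
  - rewrite (Hk x) by lra. nra.
  - apply Rlt_trans with (d (p i)); [apply IH; lia || lra|].
    rewrite (Hk (p i)) by (pose proof (Hinc i ltac:(lia)); lra). nra.
Qed.

Lemma thompsonF_fix_outside d : thompsonF d -> forall x, ~ (0 <= x < 1) -> d x = x.
Proof.
  intros Hd x Hx. destruct Hd as (Hout & _ & H1 & _).
  destruct (Req_dec x 1) as [->|]; [exact H1|]. apply Hout. lra.
Qed.

Lemma thompsonF_increasing d : thompsonF d -> forall x y, x < y -> d x < d y.
Proof.
  intros Hd.
  assert (Hrange : forall x, 0 <= x <= 1 -> 0 <= d x <= 1).
  { pose proof Hd as (_ & H0 & H1 & _). intros x Hx.
    destruct (Req_dec x 0) as [->|]; [lra|]. destruct (Req_dec x 1) as [->|]; [lra|].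
    pose proof (thompsonF_incr01 d Hd 0 x ltac:(lra) ltac:(lra)).
    pose proof (thompsonF_incr01 d Hd x 1 ltac:(lra) ltac:(lra)). lra. }
  pose proof (thompsonF_fix_outside d Hd) as Hout.
  intros x y Hxy.
  destruct (Rle_dec 0 x), (Rle_dec y 1).
  - apply (thompsonF_incr01 d Hd); lra.
  - rewrite (Hout y) by lra. destruct (Rle_dec x 1).
    + pose proof (Hrange x ltac:(lra)). lra.
    + rewrite (Hout x) by lra. exact Hxy.
  - rewrite (Hout x) by lra. destruct (Rle_dec 0 y).
    + pose proof (Hrange y ltac:(lra)). lra.
    + rewrite (Hout y) by lra. exact Hxy.
  - rewrite (Hout x), (Hout y) by lra. exact Hxy.
Qed.

Lemma thompsonF_inj d : thompsonF d -> forall x y, d x = d y -> x = y.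
Proof.
  intros Hd x y E.
  destruct (Rtotal_order x y) as [H|[H|H]]; [|exact H|];
    apply (thompsonF_increasing d Hd) in H; lra.
Qed.

Lemma thompsonF_linear_near0 d : thompsonF d -> exists a, 0 < a /\ linear_near0 d a.
Proof.
  intros (_ & H0 & _ & n & p & Hp0 & Hpn & _ & Hinc & Hpc).
  destruct n as [|n]; [rewrite Hp0 in Hpn; lra|].
  destruct (Hpc 0%nat ltac:(lia)) as (k & b & Hk). rewrite Hp0 in Hk.
  pose proof (Hinc 0%nat ltac:(lia)) as Hp1. rewrite Hp0 in Hp1.
  assert (Hb : b = 0) by (pose proof (Hk 0 ltac:(lra)); rewrite H0 in *; lra).
  exists (powerRZ 2 k). split; [apply powerRZ_lt; lra|].
  exists (p 1%nat). split; [exact Hp1|]. intros x Hx. rewrite Hk, Hb by lra. ring.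
Qed.

Lemma fixpoint_free_commute_id c c' d :
  ord_auto c c' -> fixpoint_free c -> thompsonF d -> commute d c ->
  (exists t, 0 < t < 1 /\ d t = t) -> forall x, d x = x.
Proof.
  intros Hc Hfree Hd Hdc (t0 & Ht0 & Hdt0).
  assert (Hpos : forall s, 0 < c s <-> 0 < s).
  { intros s. rewrite <- (ord_auto_0 Hc) at 1. apply (ord_auto_lt _ _ Hc). }
  (* [c] permutes the interior fixed points of [d], so they accumulate at 0. *)
  assert (Hsmall : forall e, 0 < e -> exists t, 0 < t < e /\ d t = t).
  { intros e He. apply NNPP. intros Hnone.
    refine (fixpoint_free_spread c c' (fun s => 0 < s -> d s <> s) Hc Hfree _ _
              t0 ltac:(lra) (proj1 Ht0) Hdt0).
    - intros s. rewrite Hdc, Hpos. split; intros H Hs E.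
      + apply (H Hs). rewrite E. reflexivity.
      + apply (H Hs). apply (ord_auto_inj _ _ Hc), E.
    - exists e. split; [exact He|]. intros s Hs Hs0 E.
      apply Hnone. exists s. split; [lra|exact E]. }
  destruct (thompsonF_linear_near0 d Hd) as (a & Ha & q & Hq & Hlin).
  destruct (Hsmall q Hq) as (t & Ht & Hdt).
  assert (Ha1 : a = 1).
  { rewrite Hlin in Hdt by lra. apply (Rmult_eq_reg_r t); lra. }
  assert (Hid01 : forall s, 0 <= s < 1 -> d s = s).
  { apply (fixpoint_free_agree c c' d (fun s => s) Hc Hfree Hdc (fun x => eq_refl)).
    exists q. split; [exact Hq|]. intros s Hs. rewrite Hlin, Ha1 by lra. ring. }
  intros x. destruct (classic (0 <= x < 1)).
  - now apply Hid01.
  - now apply thompsonF_fix_outside.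
Qed.

Lemma fixpoint_free_commute_commute c c' d1 d2 :
  ord_auto c c' -> fixpoint_free c -> thompsonF d1 -> thompsonF d2 ->
  commute d1 c -> commute d2 c -> commute d1 d2.
Proof.
  intros Hc Hfree Hd1 Hd2 H1c H2c.
  destruct (thompsonF_linear_near0 d1 Hd1) as (a1 & Ha1 & Hlin1).
  destruct (thompsonF_linear_near0 d2 Hd2) as (a2 & Ha2 & Hlin2).
  assert (Hagree : forall s, 0 <= s < 1 -> d1 (d2 s) = d2 (d1 s)).
  { apply (fixpoint_free_agree c c' _ _ Hc Hfree).
    - intros x. rewrite H2c, H1c. reflexivity.
    - intros x. rewrite H1c, H2c. reflexivity.
    - apply (linear_near0_agree _ _ (a1 * a2)); [now apply linear_near0_comp|].
      rewrite Rmult_comm. now apply linear_near0_comp. }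
  intros x. destruct (classic (0 <= x < 1)) as [Hx|Hx]; [now apply Hagree|].
  rewrite (thompsonF_fix_outside d1 Hd1 x Hx), (thompsonF_fix_outside d2 Hd2 x Hx).
  rewrite (thompsonF_fix_outside d1 Hd1 x Hx). reflexivity.
Qed.

Lemma fixpoint_free_factor c c' a b :
  ord_auto c c' -> fixpoint_free c -> thompsonF a -> thompsonF b -> commute a b ->
  (forall x, c x = a (b x)) -> fixpoint_free a \/ fixpoint_free b.
Proof.
  intros Hc Hfree Ha Hb Hab Ec.
  apply NNPP. intros Hnot. apply (Hfree (1/2)); [lra|].
  assert (Hid : forall d, thompsonF d -> commute d a -> commute d b -> ~ fixpoint_free d ->
                  forall x, d x = x).
  { intros d Hd Hda Hdb Hnfree. apply (fixpoint_free_commute_id c c' d Hc Hfree Hd).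
    - intros x. rewrite !Ec, Hda, Hdb. reflexivity.
    - apply NNPP. intros Hno. apply Hnfree. intros t Ht E. apply Hno. exists t. now split. }
  assert (Hba : commute b a) by (intros x; symmetry; apply Hab).
  rewrite Ec, (Hid b Hb Hba (fun x => eq_refl)), (Hid a Ha (fun x => eq_refl) Hab); tauto.
Qed.

Lemma dyadic_inv_pow k : dyadic (/ 2 ^ k).
Proof. exists 1%Z, k. simpl. field. apply pow_nonzero. lra. Qed.

Lemma dyadic_sub x y : dyadic x -> dyadic y -> dyadic (x - y).
Proof.
  intros (m1 & k1 & ->) (m2 & k2 & ->).
  exists (m1 * 2 ^ Z.of_nat k2 - m2 * 2 ^ Z.of_nat k1)%Z, (k1 + k2)%nat.
  rewrite minus_IZR, !mult_IZR, <- !pow_IZR, pow_add.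
  field. split; apply pow_nonzero; lra.
Qed.

Definition sep_map (n : nat) (x : R) : R :=
  if Rlt_dec x 0 then x
  else if Rle_dec x (1/2) then x / 2 ^ S n
  else if Rle_dec x (1 - / 2 ^ S (S n)) then x - 1/2 + / 2 ^ S (S n)
  else if Rle_dec x 1 then 2 ^ S n * x + 1 - 2 ^ S n
  else x.

Definition halffix_map (n : nat) (x : R) : R :=
  if Rlt_dec x 0 then x else if Rle_dec x (1/2) then sep_map n (2 * x) / 2 else x.

Ltac cases_dec :=
  repeat match goal with |- context [Rlt_dec ?a ?b] => destruct (Rlt_dec a b) end;
  repeat match goal with |- context [Rle_dec ?a ?b] => destruct (Rle_dec a b) end.

Lemma pow2_S_ge2 n : 2 <= 2 ^ S n.
Proof.
  pose proof (pow_R1_Rle 2 n ltac:(lra)). simpl. lra.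
Qed.

Lemma sep_map_thompsonF n : thompsonF (sep_map n).
Proof.
  assert (Hdy : dyadic (1 - / 2 ^ S (S n))).
  { apply dyadic_sub; [exists 1%Z, 0%nat; simpl; field|apply dyadic_inv_pow]. }
  assert (Hslope : / 2 ^ S n = powerRZ 2 (- Z.of_nat (S n))).
  { rewrite powerRZ_neg', pow_powerRZ. reflexivity. }
  pose proof (pow_powerRZ 2 (S n)) as Hslope'. pose proof (pow2_S_ge2 n) as Ht.
  unfold thompsonF, sep_map. change (2 ^ S (S n)) with (2 * 2 ^ S n) in *.
  rewrite Rinv_mult in *. unfold Rdiv. set (t := 2 ^ S n) in *.
  assert (Hts : t * / t = 1) by (apply Rinv_r; lra).
  assert (Hs : 0 < / t <= 1/2) by (split; [apply Rinv_0_lt_compat|]; nra).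
  set (s := / t) in *. clearbody t s.
  split; [intros x [Hx|Hx]; cases_dec; lra|].
  split; [cases_dec; lra|]. split; [cases_dec; nra|].
  exists 3%nat, (fun i : nat => match i with
    O => 0 | S O => 1/2 | S (S O) => 1 - / 2 * s | _ => 1 end).
  split; [reflexivity|]. split; [reflexivity|].
  split.
  { intros [|[|[|i]]] _; [exists 0%Z, 0%nat|exists 1%Z, 1%nat|exact Hdy|exists 1%Z, 0%nat];
      simpl; field. }
  split; [intros [|[|[|i]]] Hi; lra || lia|].
  intros [|[|[|i]]] Hi; [| | |lia].
  - exists (- Z.of_nat (S n))%Z, 0. intros x Hx. rewrite <- Hslope. cases_dec; nra.
  - exists 0%Z, (- 1/2 + / 2 * s). intros x Hx. simpl. cases_dec; nra.
  - exists (Z.of_nat (S n)), (1 - t). intros x Hx. rewrite <- Hslope'. cases_dec; nra.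
Qed.

Lemma halffix_map_thompsonF n : thompsonF (halffix_map n).
Proof.
  assert (Hdy : dyadic (1/2 - / 2 ^ S (S (S n)))).
  { apply dyadic_sub; [exists 1%Z, 1%nat; simpl; field|apply dyadic_inv_pow]. }
  assert (Hslope : / 2 ^ S n = powerRZ 2 (- Z.of_nat (S n))).
  { rewrite powerRZ_neg', pow_powerRZ. reflexivity. }
  pose proof (pow_powerRZ 2 (S n)) as Hslope'. pose proof (pow2_S_ge2 n) as Ht.
  unfold thompsonF, halffix_map, sep_map.
  change (2 ^ S (S (S n))) with (2 * (2 * 2 ^ S n)) in *.
  change (2 ^ S (S n)) with (2 * 2 ^ S n) in *.
  rewrite !Rinv_mult in *. unfold Rdiv. set (t := 2 ^ S n) in *.
  assert (Hts : t * / t = 1) by (apply Rinv_r; lra).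
  assert (Hs : 0 < / t <= 1/2) by (split; [apply Rinv_0_lt_compat|]; nra).
  set (s := / t) in *. clearbody t s.
  split; [intros x [Hx|Hx]; cases_dec; lra|].
  split; [cases_dec; lra|]. split; [cases_dec; lra|].
  exists 4%nat, (fun i : nat => match i with
    O => 0 | S O => 1/4 | S (S O) => 1/2 - / 2 * (/ 2 * s) | S (S (S O)) => 1/2 | _ => 1 end).
  split; [reflexivity|]. split; [reflexivity|].
  split.
  { intros [|[|[|[|i]]]] _;
      [exists 0%Z, 0%nat|exists 1%Z, 2%nat|exact Hdy|exists 1%Z, 1%nat|exists 1%Z, 0%nat];
      simpl; field. }
  split; [intros [|[|[|[|i]]]] Hi; lra || lia|].
  intros [|[|[|[|i]]]] Hi; [| | | |lia].
  - exists (- Z.of_nat (S n))%Z, 0. intros x Hx. rewrite <- Hslope. cases_dec; nra.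
  - exists 0%Z, (- 1/4 + / 2 * (/ 2 * s)). intros x Hx. simpl. cases_dec; nra.
  - exists (Z.of_nat (S n)), (1/2 - / 2 * t). intros x Hx. rewrite <- Hslope'. cases_dec; nra.
  - exists 0%Z, 0. intros x Hx. simpl. cases_dec; nra.
Qed.

(* [sep_map n] is convex on [0,1], hence the maximum of its three affine pieces,
   and each piece decreases strictly with [n] on (0,1). *)
Lemma sep_map_max_pieces n x : 0 <= x <= 1 ->
  let t := 2 ^ S n in
  (x / t <= sep_map n x /\ x - 1/2 + / (2 * t) <= sep_map n x /\ t * x + 1 - t <= sep_map n x) /\
  (sep_map n x = x / t \/ sep_map n x = x - 1/2 + / (2 * t) \/ sep_map n x = t * x + 1 - t).
Proof.
  intros Hx. cbv zeta. pose proof (pow2_S_ge2 n) as Ht. unfold sep_map.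
  change (2 ^ S (S n)) with (2 * 2 ^ S n). set (t := 2 ^ S n) in *.
  rewrite !Rinv_mult. unfold Rdiv.
  assert (Hts : t * / t = 1) by (apply Rinv_r; lra).
  assert (Hs : 0 < / t <= 1/2) by (split; [apply Rinv_0_lt_compat|]; nra).
  set (s := / t) in *. clearbody t s.
  cases_dec; (split; [repeat split; nra|tauto || lra]).
Qed.

Lemma sep_map_decreasing m n : (m < n)%nat -> forall x, 0 < x < 1 -> sep_map n x < sep_map m x.
Proof.
  intros Hmn x Hx.
  assert (Htmn : 2 ^ S m < 2 ^ S n) by (apply Rlt_pow; lra || lia).
  pose proof (pow2_S_ge2 m).
  assert (Hinv : / 2 ^ S n < / 2 ^ S m) by (apply Rinv_lt_contravar; nra).
  destruct (sep_map_max_pieces m x ltac:(lra)) as ((A1 & A2 & A3) & _).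
  destruct (sep_map_max_pieces n x ltac:(lra)) as (_ & [B|[B|B]]); rewrite B;
    unfold Rdiv in *; rewrite Rinv_mult in *; nra.
Qed.

Lemma halffix_map_half n : halffix_map n (1/2) = 1/2.
Proof.
  pose proof (pow2_S_ge2 n). unfold halffix_map, sep_map. change (2 ^ S (S n)) with (2 * 2 ^ S n).
  assert (0 < / (2 * 2 ^ S n)) by (apply Rinv_0_lt_compat; lra).
  cases_dec; try lra; field.
Qed.

Lemma halffix_map_quarter n : halffix_map n (1/4) = / 2 ^ S (S (S n)).
Proof.
  pose proof (pow2_S_ge2 n). unfold halffix_map, sep_map.
  change (2 ^ S (S (S n))) with (2 * (2 * 2 ^ S n)).
  cases_dec; try lra; field; lra.
Qed.

Lemma sep_map_neq m n : m <> n -> forall x, 0 < x < 1 -> sep_map m x <> sep_map n x.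
Proof.
  intros Hmn x Hx. destruct (Nat.lt_total m n) as [H|[H|H]]; [|contradiction|];
    apply (sep_map_decreasing _ _ H) in Hx; lra.
Qed.

Lemma halffix_map_quarter_inj m n : halffix_map m (1/4) = halffix_map n (1/4) -> m = n.
Proof.
  rewrite !halffix_map_quarter. intros E. apply Rinv_eq_reg in E.
  assert (Hpow : forall a b, (a < b)%nat -> 2 ^ S (S (S a)) <> 2 ^ S (S (S b)))
    by (intros a b Hab; apply Rlt_not_eq, Rlt_pow; lra || lia).
  destruct (Nat.lt_total m n) as [H|[H|H]]; [|exact H|]; apply Hpow in H; congruence.
Qed.

Lemma sep_map_coset_fixpoint_free m n c : m <> n ->
  (forall x, sep_map m (c x) = sep_map n x) -> fixpoint_free c.
Proof.
  intros Hmn Ec x Hx E. apply (sep_map_neq m n Hmn x Hx). rewrite <- Ec, E. reflexivity.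
Qed.

Lemma halffix_map_coset m n c : m <> n ->
  (forall x, halffix_map m (c x) = halffix_map n x) ->
  (exists t, 0 < t < 1 /\ c t = t) /\ (exists x, c x <> x).
Proof.
  intros Hmn Ec. split.
  - exists (1/2). split; [lra|]. apply (thompsonF_inj _ (halffix_map_thompsonF m)).
    rewrite Ec, !halffix_map_half. reflexivity.
  - exists (1/4). intros E. apply Hmn, halffix_map_quarter_inj. now rewrite <- Ec, E.
Qed.

Lemma pigeonhole {A : Type} (l : list A) (P : nat -> A -> Prop) :
  (forall n, exists a, In a l /\ P n a) -> exists m n a, m <> n /\ P m a /\ P n a.
Proof.
  intros HP. destruct (choice _ HP) as (f & Hf).
  apply NNPP. intros Hinj.
  assert (Hnodup : NoDup (map f (seq 0 (S (length l))))).
  { apply NoDup_map_NoDup_ForallPairs; [|apply seq_NoDup].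
    intros m n _ _ E. apply NNPP. intros Hmn. apply Hinj.
    exists m, n, (f m). split; [exact Hmn|]. split; [apply Hf|]. rewrite E. apply Hf. }
  apply NoDup_incl_length with (l' := l) in Hnodup.
  - rewrite length_map, length_seq in Hnodup. lia.
  - intros a Ha. apply in_map_iff in Ha as (n & <- & _). apply Hf.
Qed.

Section GroupFacts.
Variable G : Grp.

Lemma gmulV_r (x : G) : gmul G x (ginv G x) = gone G.
Proof.
  set (y := ginv G x).
  transitivity (gmul G (gmul G (ginv G y) y) (gmul G x y)).
  { rewrite gmulV, gmul1. reflexivity. }
  rewrite <- gmulA, (gmulA G y x y). unfold y at 2. rewrite gmulV, gmul1. apply gmulV.
Qed.

Lemma gmul1_r (x : G) : gmul G x (gone G) = x.
Proof. rewrite <- (gmulV G x), gmulA, gmulV_r, gmul1. reflexivity. Qed.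

End GroupFacts.

Definition pinv (G1 G2 : Grp) (p : gcar G1 * gcar G2) : gcar G1 * gcar G2 :=
  (ginv G1 (fst p), ginv G2 (snd p)).

Section ProductHomomorphism.
Variables (G1 G2 : Grp) (phi : gcar G1 * gcar G2 -> R -> R).
Hypothesis phi_F : forall p, thompsonF (phi p).
Hypothesis phi_hom : forall p q, phi (pmul G1 G2 p q) = fcomp (phi p) (phi q).

Lemma phi_mul p q x : phi (pmul G1 G2 p q) x = phi p (phi q x).
Proof. rewrite phi_hom. reflexivity. Qed.

Lemma phi_one x : phi (gone G1, gone G2) x = x.
Proof.
  apply (thompsonF_inj _ (phi_F (gone G1, gone G2))).
  rewrite <- phi_mul. unfold pmul. simpl. rewrite !gmul1. reflexivity.
Qed.

Lemma phi_ord_auto p : ord_auto (phi p) (phi (pinv G1 G2 p)).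
Proof.
  split.
  - intros x. rewrite <- phi_mul. unfold pmul, pinv. simpl. rewrite !gmulV. apply phi_one.
  - intros x. rewrite <- phi_mul. unfold pmul, pinv. simpl. rewrite !gmulV_r. apply phi_one.
  - apply thompsonF_increasing, phi_F.
  - apply phi_F.
Qed.

Lemma phi_split p x : phi p x = phi (fst p, gone G2) (phi (gone G1, snd p) x).
Proof. rewrite <- phi_mul. unfold pmul. simpl. rewrite gmul1, gmul1_r. destruct p. reflexivity. Qed.

Lemma phi_commute a b : commute (phi (a, gone G2)) (phi (gone G1, b)).
Proof.
  intros x. rewrite <- !phi_mul. unfold pmul. simpl. rewrite !gmul1, !gmul1_r. reflexivity.
Qed.

Lemma phi_same_coset g h1 h2 f1 f2 :
  f1 = fcomp g (phi h1) -> f2 = fcomp g (phi h2) ->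
  forall x, f1 (phi (pmul G1 G2 (pinv G1 G2 h1) h2) x) = f2 x.
Proof.
  intros -> -> x. unfold fcomp. rewrite <- phi_mul. f_equal. f_equal.
  destruct h1, h2. unfold pmul, pinv. simpl.
  rewrite !gmulA, (gmulV_r G1), (gmulV_r G2), !gmul1. reflexivity.
Qed.

Lemma phi_coset_collision (l : list (R -> R)) (f : nat -> R -> R) :
  (forall g, thompsonF g -> exists g' h, In g' l /\ g = fcomp g' (phi h)) ->
  (forall n, thompsonF (f n)) ->
  exists m n h, m <> n /\ forall x, f m (phi h x) = f n x.
Proof.
  intros Hcov Hf.
  destruct (pigeonhole l (fun n g => exists h, f n = fcomp g (phi h)))
    as (m & n & g & Hmn & (h1 & E1) & (h2 & E2)).
  { intros n. destruct (Hcov _ (Hf n)) as (g & h & Hg & E). eauto. }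
  exists m, n, (pmul G1 G2 (pinv G1 G2 h1) h2).
  split; [exact Hmn|exact (phi_same_coset g h1 h2 _ _ E1 E2)].
Qed.

Lemma phi_factor_fixpoint_free p : fixpoint_free (phi p) ->
  fixpoint_free (phi (fst p, gone G2)) \/ fixpoint_free (phi (gone G1, snd p)).
Proof.
  intros Hp. apply (fixpoint_free_factor _ _ _ _ (phi_ord_auto p) Hp); try apply phi_F.
  - apply phi_commute.
  - apply phi_split.
Qed.

Lemma phi_second_factor_trivial a q :
  fixpoint_free (phi (a, gone G2)) -> (exists t, 0 < t < 1 /\ phi q t = t) ->
  (exists x, phi q x <> x) -> forall b, phi (gone G1, b) = fun x => x.
Proof.
  intros Ha Hq [x0 Hx0] b. apply functional_extensionality. intros x.
  apply NNPP. intros Hbx.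
  pose proof (phi_ord_auto (a, gone G2)) as Hauto.
  assert (Hb_free : fixpoint_free (phi (gone G1, b))).
  { intros s Hs E. apply Hbx. apply (fixpoint_free_commute_id _ _ _ Hauto Ha (phi_F _)).
    - intros y. symmetry. apply phi_commute.
    - exists s. split; assumption. }
  assert (Hq1 : commute (phi (fst q, gone G2)) (phi (a, gone G2))).
  { apply (fixpoint_free_commute_commute _ _ _ _ (phi_ord_auto (gone G1, b)) Hb_free);
      try apply phi_F; apply phi_commute. }
  apply Hx0. apply (fixpoint_free_commute_id _ _ _ Hauto Ha (phi_F q)); [|exact Hq].
  intros y. rewrite !(phi_split q), <- phi_commute, Hq1. reflexivity.
Qed.

End ProductHomomorphism.

Lemma phi_first_factor_trivial (G1 G2 : Grp) (phi : gcar G1 * gcar G2 -> R -> R) :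
  (forall p, thompsonF (phi p)) ->
  (forall p q, phi (pmul G1 G2 p q) = fcomp (phi p) (phi q)) ->
  forall b q, fixpoint_free (phi (gone G1, b)) -> (exists t, 0 < t < 1 /\ phi q t = t) ->
  (exists x, phi q x <> x) -> forall a, phi (a, gone G2) = fun x => x.
Proof.
  intros Hphi Hhom b [qa qb].
  exact (phi_second_factor_trivial G2 G1 (fun r => phi (snd r, fst r)) (fun r => Hphi _)
           (fun r s => Hhom (snd r, fst r) (snd s, fst s)) b (qb, qa)).
Qed.

Lemma thompsonF_infinite : ~ (exists l : list (R -> R), forall f, thompsonF f -> In f l).
Proof.
  intros (l & Hl).
  destruct (pigeonhole l (fun n f => f = sep_map n)) as (m & n & f & Hmn & -> & Hn).
  { intros n. exists (sep_map n). split; [apply Hl, sep_map_thompsonF|reflexivity]. }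
  apply (sep_map_neq m n Hmn (1/2)); [lra|]. now rewrite Hn.
Qed.

Theorem proposition7p1 :
  (* F is infinite *)
  ~ (exists l : list (R -> R), forall f, thompsonF f -> In f l) /\
  (* F is not presentable by a product *)
  (forall (G1 G2 : Grp) (phi : gcar G1 * gcar G2 -> (R -> R)),
     (forall p, thompsonF (phi p)) ->
     (forall p q, phi (pmul G1 G2 p q) = fcomp (phi p) (phi q)) ->
     (exists l : list (R -> R),
        Forall thompsonF l /\
        forall f, thompsonF f ->
          exists g h, In g l /\ f = fcomp g (phi h)) ->
     (exists l : list (R -> R), forall a : gcar G1, In (phi (a, gone G2)) l) \/
     (exists l : list (R -> R), forall b : gcar G2, In (phi (gone G1, b)) l)).
Proof.
  split; [exact thompsonF_infinite|].
  intros G1 G2 phi Hphi Hhom (l & _ & Hcov).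
  destruct (phi_coset_collision G1 G2 phi Hhom l sep_map Hcov sep_map_thompsonF)
    as (m & n & [a b] & Hmn & Ep).
  destruct (phi_coset_collision G1 G2 phi Hhom l halffix_map Hcov halffix_map_thompsonF)
    as (m' & n' & q & Hmn' & Eq).
  destruct (halffix_map_coset _ _ _ Hmn' Eq) as [Hq_fix Hq_moves].
  pose proof (sep_map_coset_fixpoint_free _ _ _ Hmn Ep) as Hp.
  destruct (phi_factor_fixpoint_free G1 G2 phi Hphi Hhom (a, b) Hp) as [Ha|Hb].
  - right. exists (cons (fun x => x) nil). intros b'. left. symmetry.
    exact (phi_second_factor_trivial G1 G2 phi Hphi Hhom a q Ha Hq_fix Hq_moves b').
  - left. exists (cons (fun x => x) nil). intros a'. left. symmetry.
    exact (phi_first_factor_trivial G1 G2 phi Hphi Hhom b q Hb Hq_fix Hq_moves a').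
Qed.
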